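(* Let $R$ be a commutative semiring with identity that is additively cancellative, yoked and zerosumfree. Then for every $a\in R$, the principal ideal $\langle a\rangle = aR=\{ar\mid r\in R\}$ is a $k$-ideal of $R$.
   Context: A semiring is a set $R$ with addition and multiplication such that $(R,+)$ is a commutative monoid with identity $0$, $(R,\cdot)$ is a monoid with identity $1$, multiplication distributes over addition on both sides, $0\cdot r=0=r\cdot 0$ for all $r$, and $1\neq 0$. An ideal $I$ is a $k$-ideal if $x+y\in I$ and $x\in I$ imply $y\in I$. $R$ is additively cancellative if $a+c=b+c$ implies $a=b$; yoked if for all $a,b\in R$ there exists $r\in R$ with $a+r=b$ or $b+r=a$; zerosumfree if $a+b=0$ implies $a=b=0$. *)

From mathcomp Require Import all_boot all_algebra.
Set Implicit Arguments. Unset Strict Implicit. Unset Printing Implicit Defensive.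
Import GRing.Theory.
Local Open Scope ring_scope.

Definition add_cancellative (R : comNzSemiRingType) : Prop :=
  forall a b c : R, a + c = b + c -> a = b.

Definition yoked (R : comNzSemiRingType) : Prop :=
  forall a b : R, exists r : R, a + r = b \/ b + r = a.

Definition zerosumfree (R : comNzSemiRingType) : Prop :=
  forall a b : R, a + b = 0 -> a = 0 /\ b = 0.

Definition is_ideal (R : comNzSemiRingType) (I : R -> Prop) : Prop :=
  [/\ I 0, (forall x y, I x -> I y -> I (x + y)) & (forall r x, I x -> I (r * x))].

Definition is_k_ideal (R : comNzSemiRingType) (I : R -> Prop) : Prop :=
  is_ideal I /\ forall x y : R, I (x + y) -> I x -> I y.

Definition principal_ideal (R : comNzSemiRingType) (a : R) : R -> Prop :=
  fun x => exists r : R, x = a * r.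

From mathcomp Require Import all_boot all_algebra.

(* Let a s + y = a r.  Yoking s and r gives t with either r = s + t, and then
   cancelling a s yields y = a t, or s = r + t, and then a r + (a t + y) = a r
   forces a t + y = 0, so y = 0 by zerosumfreeness. *)

Set Implicit Arguments.
Unset Strict Implicit.
Unset Printing Implicit Defensive.

Import GRing.Theory.
Local Open Scope ring_scope.

Lemma principal_ideal_is_ideal (R : comNzSemiRingType) (a : R) :
  is_ideal (principal_ideal a).
Proof.
split.
- by exists 0; rewrite mulr0.
- by move=> _ _ [r ->] [s ->]; exists (r + s); rewrite mulrDr.
- by move=> r _ [s ->]; exists (r * s); rewrite mulrCA.
Qed.

Section AddCancellative.

Variable R : comNzSemiRingType.
Hypothesis hc : add_cancellative R.

Lemma add_cancellative_addrI (x : R) : injective (+%R x).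
Proof. by move=> y z /=; rewrite ![x + _]addrC => /hc. Qed.

Lemma add_cancellative_addr_eq_self (x y : R) : x + y = x -> y = 0.
Proof. by rewrite -[RHS]addr0 => /add_cancellative_addrI. Qed.

Hypotheses (hy : yoked R) (hz : zerosumfree R).

Lemma principal_ideal_subtractive (a x y : R) :
  principal_ideal a (x + y) -> principal_ideal a x -> principal_ideal a y.
Proof.
move=> [r Hr] [s Hs]; subst x.
have [t [Hr_st | Hs_rt]] := hy s r.
- exists t; apply: (@add_cancellative_addrI (a * s)).
  by rewrite Hr -Hr_st mulrDr.
- exists 0; rewrite mulr0.
  have Hat_y : a * t + y = 0.
    by apply: (@add_cancellative_addr_eq_self (a * r)); rewrite addrA -mulrDr Hs_rt.
  by case: (hz Hat_y).
Qed.

End AddCancellative.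

Theorem lemma2p10 (R : comNzSemiRingType)
  (hc : add_cancellative R) (hy : yoked R) (hz : zerosumfree R) :
  forall a : R, is_k_ideal (principal_ideal a).
Proof.
move=> a; split; first exact: principal_ideal_is_ideal.
exact: principal_ideal_subtractive.
Qed.
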